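(* Let $n_d\ge 1$, let $S_1,\dots,S_{n_d}>0$, and let $\underline{P_0}\le\overline{P_0}$ be real numbers. For $S>0$ define $\mathcal{X}(S,\underline{P_0},\overline{P_0})=\{(P,Q)\in\mathbb{R}^2: S\underline{P_0}\le P\le S\overline{P_0},\ Q^2\le S^2-P^2\}$. Then $$\bigoplus_{i=1}^{n_d}\mathcal{X}(S_i,\underline{P_0},\overline{P_0})=\mathcal{X}\Big(\sum_{i=1}^{n_d}S_i,\underline{P_0},\overline{P_0}\Big).$$
   Context: $\oplus$ denotes the Minkowski sum $A\oplus B=\{a+b: a\in A, b\in B\}$. The set $\mathcal{X}(S,\underline{P},\overline{P})$ is the feasible real/reactive power set of an inverter with apparent power rating $S$ and normalized real power bounds $\underline{P},\overline{P}$. *)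

From Stdlib Require Import Reals.
Open Scope R_scope.

Definition set2 := R * R -> Prop.

Definition Xset (S Plo Phi : R) : set2 :=
  fun z => S * Plo <= fst z <= S * Phi /\ (snd z) ^ 2 <= S ^ 2 - (fst z) ^ 2.

Definition msum2 (A B : set2) : set2 :=
  fun z => exists a b, A a /\ B b /\ z = (fst a + fst b, snd a + snd b).

Fixpoint msum (n : nat) (X : nat -> set2) : set2 :=
  match n with
  | O => fun z => z = (0, 0)
  | S m => msum2 (msum m X) (X m)
  end.

Fixpoint rsum (n : nat) (f : nat -> R) : R :=
  match n with
  | O => 0
  | S m => rsum m f + f m
  end.

(* X(S) is the dilate S·X(1) of the convex set X(1) (a slab cut out of the unit disk),
   and for a convex K and a, b >= 0 one has aK ⊕ bK = (a+b)K: the inclusion ⊆ is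
   convexity (here the triangle inequality for the disk), and ⊇ splits z ∈ (a+b)K as
   t z + (1-t) z with t = a/(a+b). *)

From Stdlib Require Import Reals Lra Psatz Lia.
Open Scope R_scope.

Section FeasibleSet.

Variables Plo Phi : R.

Lemma Xset_0 (z : R * R) : Xset 0 Plo Phi z <-> z = (0, 0).
Proof.
  destruct z as [p q]; unfold Xset; simpl; split.
  - intros [Hp Hq]. assert (p = 0) by lra. subst p.
    assert (q = 0) by nra. subst q. reflexivity.
  - intros E. injection E as -> ->. lra.
Qed.

Lemma Xset_scale (t c : R) (z : R * R) :
  0 <= t -> Xset c Plo Phi z -> Xset (t * c) Plo Phi (t * fst z, t * snd z).
Proof.
  destruct z as [p q]; unfold Xset; simpl.
  intros Ht [[Hlo Hhi] Hq]. split; [split|].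
  - apply Rmult_le_compat_l with (r := t) in Hlo; lra.
  - apply Rmult_le_compat_l with (r := t) in Hhi; lra.
  - assert (0 <= t * t) by nra. nra.
Qed.

Lemma cauchy_schwarz2 (pu qu pv qv : R) :
  (pu * pv + qu * qv) ^ 2 <= (pu ^ 2 + qu ^ 2) * (pv ^ 2 + qv ^ 2).
Proof.
  (* Lagrange's identity: the difference is (pu qv - qu pv)^2. *)
  assert (0 <= (pu * qv - qu * pv) ^ 2) by apply pow2_ge_0.
  nra.
Qed.

Lemma disk_add (a b pu qu pv qv : R) :
  0 <= a -> 0 <= b ->
  pu ^ 2 + qu ^ 2 <= a ^ 2 -> pv ^ 2 + qv ^ 2 <= b ^ 2 ->
  (pu + pv) ^ 2 + (qu + qv) ^ 2 <= (a + b) ^ 2.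
Proof.
  intros Ha Hb Hu Hv.
  assert (Hprod : (pu ^ 2 + qu ^ 2) * (pv ^ 2 + qv ^ 2) <= a ^ 2 * b ^ 2).
  { apply Rmult_le_compat; nra. }
  assert (Hinner : pu * pv + qu * qv <= a * b).
  { pose proof (cauchy_schwarz2 pu qu pv qv).
    assert (0 <= a * b) by nra.
    destruct (Rle_dec (pu * pv + qu * qv) 0); nra. }
  nra.
Qed.

Lemma msum2_Xset (a b : R) (z : R * R) :
  0 <= a -> 0 <= b ->
  msum2 (Xset a Plo Phi) (Xset b Plo Phi) z <-> Xset (a + b) Plo Phi z.
Proof.
  intros Ha Hb. split.
  - intros [[pu qu] [[pv qv] [[[Hulo Huhi] Hu] [[[Hvlo Hvhi] Hv] ->]]]].
    unfold Xset; simpl in *. split; [lra|].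
    pose proof (disk_add a b pu qu pv qv Ha Hb). lra.
  - intros Hz.
    assert (Ht : exists t, 0 <= t <= 1 /\ a = t * (a + b) /\ b = (1 - t) * (a + b)).
    { destruct (Req_dec (a + b) 0) as [E | E].
      - exists 0. repeat split; lra.
      - set (t := a / (a + b)).
        assert (Ea : a = t * (a + b)) by (unfold t; field; exact E).
        exists t. repeat split; nra. }
    destruct Ht as [t [[Ht0 Ht1] [Ea Eb]]].
    set (c := a + b) in *.
    exists (t * fst z, t * snd z), ((1 - t) * fst z, (1 - t) * snd z).
    rewrite Ea, Eb. split; [|split].
    + apply Xset_scale; assumption.
    + apply Xset_scale; [lra | assumption].
    + destruct z as [p q]; simpl; f_equal; ring.
Qed.

End FeasibleSet.

Lemma msum2_ext_l (A A' B : set2) (z : R * R) :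
  (forall w, A w <-> A' w) -> msum2 A B z <-> msum2 A' B z.
Proof.
  intros HA. unfold msum2.
  split; intros [a [b [Ha Hb]]]; exists a, b; split; try apply HA; assumption.
Qed.

Lemma rsum_nonneg (n : nat) (f : nat -> R) :
  (forall i, (i < n)%nat -> 0 <= f i) -> 0 <= rsum n f.
Proof.
  induction n as [|n IH]; intros Hf; simpl; [lra|].
  assert (0 <= rsum n f) by (apply IH; intros; apply Hf; lia).
  assert (0 <= f n) by (apply Hf; lia).
  lra.
Qed.

Lemma msum_Xset (n : nat) (S : nat -> R) (Plo Phi : R) (z : R * R) :
  (forall i, (i < n)%nat -> 0 <= S i) ->
  msum n (fun i => Xset (S i) Plo Phi) z <-> Xset (rsum n S) Plo Phi z.
Proof.
  revert z. induction n as [|n IH]; intros z HS; simpl.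
  - symmetry. apply Xset_0.
  - assert (HSn : forall i, (i < n)%nat -> 0 <= S i) by (intros; apply HS; lia).
    rewrite (msum2_ext_l _ (Xset (rsum n S) Plo Phi)) by (intros; apply IH; exact HSn).
    apply msum2_Xset; [apply rsum_nonneg; exact HSn | apply HS; lia].
Qed.

Theorem theorem1 (nd : nat) (S : nat -> R) (Plo Phi : R) :
  (1 <= nd)%nat ->
  (forall i, (i < nd)%nat -> 0 < S i) ->
  Plo <= Phi ->
  forall z : R * R,
    msum nd (fun i => Xset (S i) Plo Phi) z <-> Xset (rsum nd S) Plo Phi z.
Proof.
  intros _ HS _ z.
  apply msum_Xset.
  intros i Hi. apply Rlt_le, HS, Hi.
Qed.
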